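(* Let $r$ be a prime power and $q=r^2$. If there exist linear codes $C_1$ and $C_2$ over $\mathbb{F}_q$ with parameters $[m,k_1,d_1]_q$ and $[m,k_2,d_2]_q$ such that $C_1\subseteq C_2^{\perp_H}$, then there exists a Hermitian self-orthogonal linear code over $\mathbb{F}_q$ with parameters $[2m,k_1+k_2,d]_q$ where $d\ge\min\{2d_1,d_2\}$.
   Context: For $a\in\mathbb{F}_q$, $\overline{a}:=a^r$. The Hermitian inner product on $\mathbb{F}_q^n$ is $\langle u,v\rangle_H=\sum_i u_i\overline{v_i}$, and $C^{\perp_H}=\{v:\langle u,v\rangle_H=0\ \forall u\in C\}$; $C$ is Hermitian self-orthogonal if $C\subseteq C^{\perp_H}$. A code with parameters $[n,k,d]_q$ is a linear code of length $n$, dimension $k$ and minimum Hamming weight $d$ over $\mathbb{F}_q$. *)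

From HB Require Import structures.
From mathcomp Require Import all_boot all_order all_algebra all_field.
Set Implicit Arguments. Unset Strict Implicit. Unset Printing Implicit Defensive.
Import GRing.Theory.
Local Open Scope ring_scope.

Definition prime_power (r : nat) : Prop :=
  exists p e : nat, prime p /\ (0 < e)%N /\ r = (p ^ e)%N.

(* Hermitian inner product <u,v>_H = sum_i u_i * conj(v_i), conj a = a^r *)
Definition hdot (F : finFieldType) (r m : nat) (u v : 'rV[F]_m) : F :=
  \sum_(i < m) u 0 i * (v 0 i) ^+ r.

Definition herm_dual (F : finFieldType) (r m : nat) (C : {vspace 'rV[F]_m})
  : {set 'rV[F]_m} :=
  [set v | [forall u, (u \in C) ==> (hdot r u v == 0)]].

Definition wt (F : finFieldType) (m : nat) (v : 'rV[F]_m) : nat :=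
  #|[set i : 'I_m | v 0 i != 0]|.

Definition min_dist (F : finFieldType) (m : nat) (C : {vspace 'rV[F]_m}) (d : nat)
  : Prop :=
  (exists2 c, c \in C & (c != 0) && (wt c == d)) /\
  (forall c, c \in C -> c != 0 -> (d <= wt c)%N).

(* C is a linear [n,k,d]_q code (n is the ambient length, fixed by the type) *)
Definition code_params (F : finFieldType) (m : nat) (C : {vspace 'rV[F]_m})
  (k d : nat) : Prop :=
  \dim C = k /\ min_dist C d.

Definition herm_self_orth (F : finFieldType) (r m : nat) (C : {vspace 'rV[F]_m})
  : Prop :=
  forall v, v \in C -> v \in herm_dual r C.

From HB Require Import structures.
From mathcomp Require Import all_boot all_order all_algebra all_field cyclic.
From mathcomp Require Import zify ring.
Set Implicit Arguments. Unset Strict Implicit. Unset Printing Implicit Defensive.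
Import GRing.Theory.
Local Open Scope ring_scope.

(* Pick a != b in F_q with a^(r+1) = b^(r+1) = -1: writing -1 = g^k for a
   generator g of the cyclic group F_q^* of order (r-1)(r+1), the additivity of
   x |-> x^r gives (-1)^(r-1) = 1, hence (r+1) | k, and a = g^(k/(r+1)),
   b = a g^(r-1) work.  Then take
   C = {(u + v | a u + b v) : u in C1, v in C2}.  Expanding the Hermitian
   product of two codewords, the diagonal terms carry the factors 1 + a^(r+1)
   and 1 + b^(r+1), which vanish, while the cross terms vanish because
   C1 is Hermitian-orthogonal to C2.  A codeword with v = 0 is (u | a u), of
   weight 2 wt u >= 2 d1; otherwise a != b forces every position in the
   support of v to contribute to one of the two halves, so its weight is at
   least wt v >= d2. *)

Lemma prime_power_gt1 r : prime_power r -> (1 < r)%N.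
Proof. by case=> p [e [p_prime [e_gt0 ->]]]; rewrite -(exp1n e) ltn_exp2r ?prime_gt1. Qed.

Lemma exprD_prime_power (F : finFieldType) r n :
  prime_power r -> #|F| = (r ^ n)%N -> forall x y : F, (x + y) ^+ r = x ^+ r + y ^+ r.
Proof.
case=> p [e [p_prime [_ rE]]] cardF x y.
have p_char : p \in [pchar F].
  by apply: (@card_finPcharP F p (e * n)); rewrite // cardF rE expnM.
by apply: exprDn_pchar; rewrite rE pnatX pnatE // p_char.
Qed.

Lemma exists_prim_root_card (F : finFieldType) : exists g : F, #|F|.-1.-primitive_root g.
Proof.
have F_gt1 : (1 < #|F|)%N := card_finNzRing_gt1 F.
have : has #|F|.-1.-primitive_root (enum (predC1 (0 : F))).
  apply: has_prim_root; first by rewrite -subn1 subn_gt0.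
  - apply/allP => x; rewrite mem_enum /= => x_neq0.
    by rewrite unity_rootE -(inj_eq (mulfI x_neq0)) mulr1 -exprS prednK ?expf_card // ltnW.
  - exact: enum_uniq.
  - by rewrite -cardE cardC1.
by case/hasP=> g _ g_prim; exists g.
Qed.

Section ConjugationFq.

Variables (F : finFieldType) (r : nat).
Hypothesis r_gt1 : (1 < r)%N.
Hypothesis cardF : #|F| = (r ^ 2)%N.
Hypothesis conjD : forall x y : F, (x + y) ^+ r = x ^+ r + y ^+ r.

Lemma conjK (x : F) : (x ^+ r) ^+ r = x.
Proof. by rewrite -exprM -[RHS]expf_card cardF. Qed.

Lemma conjN1 : (-1 : F) ^+ r = -1.
Proof.
have := conjD 1 (-1); rewrite subrr expr0n gtn_eqF ?(ltnW r_gt1) // expr1n.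
by move=> h; apply/eqP; rewrite -addr_eq0 addrC -h.
Qed.

Lemma signr_pred_exp : (-1 : F) ^+ r.-1 = 1.
Proof.
have N1_neq0 : (-1 : F) != 0 by rewrite oppr_eq0 oner_neq0.
by apply: (mulfI N1_neq0); rewrite -exprS prednK ?conjN1 ?mulr1 // ltnW.
Qed.

Lemma exists_two_norm_neg1 :
  exists a b : F, [/\ a ^+ r.+1 = -1, b ^+ r.+1 = -1 & a != b].
Proof.
have [g] := exists_prim_root_card F; rewrite cardF => g_prim.
have nE : (r ^ 2).-1 = (r.-1 * r.+1)%N by rewrite -subn1; lia.
have gn1 : g ^+ (r.-1 * r.+1) = 1 by rewrite -nE prim_expr_order.
have N1n : (-1 : F) ^+ (r ^ 2).-1 = 1 by rewrite nE exprM signr_pred_exp expr1n.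
have [[k _] /= N1E] := prim_rootP g_prim N1n.
have /dvdnP[j kE] : (r.+1 %| k)%N.
  have : ((r ^ 2).-1 %| k * r.-1)%N.
    by rewrite (prim_order_dvd g_prim) exprM -N1E signr_pred_exp.
  by rewrite nE [(r.-1 * _)%N]mulnC dvdn_pmul2r // -subn1 subn_gt0.
have g_neq0 : g != 0 by rewrite (prim_root_eq0 g_prim) nE; lia.
exists (g ^+ j), (g ^+ j * g ^+ r.-1); split.
- by rewrite -exprM -kE N1E.
- by rewrite exprMn -!exprM -kE -N1E gn1 mulr1.
- rewrite -{1}[g ^+ j]mulr1 (inj_eq (mulfI _)) ?expf_neq0 // eq_sym -(prim_order_dvd g_prim) nE.
  by apply/negP => /dvdn_leq; nia.
Qed.

End ConjugationFq.

Section HermitianFormAndWeight.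

Variables (F : finFieldType) (r : nat).

Lemma herm_dualP m (C : {vspace 'rV[F]_m}) v :
  reflect (forall u, u \in C -> hdot r u v = 0) (v \in herm_dual r C).
Proof.
rewrite inE; apply: (iffP forallP) => [dualv u uC | orthv u].
  exact/eqP/(implyP (dualv u)).
by apply/implyP => /orthv ->.
Qed.

Lemma hdot_row_mx m1 m2 (x x' : 'rV[F]_m1) (y y' : 'rV[F]_m2) :
  hdot r (row_mx x y) (row_mx x' y') = hdot r x x' + hdot r y y'.
Proof.
rewrite /hdot big_split_ord /=; congr (_ + _).
  by apply: eq_bigr => i _; rewrite !row_mxEl.
by apply: eq_bigr => i _; rewrite !row_mxEr.
Qed.

Lemma wtE m (v : 'rV[F]_m) : wt v = (\sum_i ((v 0 i != 0)%R : nat))%N.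
Proof.
rewrite /wt -sum1_card big_mkcond /=.
by apply: eq_bigr => i _; rewrite inE; case: (v 0 i != 0).
Qed.

Lemma wt_row_mx m1 m2 (x : 'rV[F]_m1) (y : 'rV[F]_m2) :
  wt (row_mx x y) = (wt x + wt y)%N.
Proof.
rewrite !wtE big_split_ord /=; congr (_ + _)%N.
  by apply: eq_bigr => i _; rewrite row_mxEl.
by apply: eq_bigr => i _; rewrite row_mxEr.
Qed.

Lemma wtZ m (a : F) (v : 'rV[F]_m) : a != 0 -> wt (a *: v) = wt v.
Proof.
move=> a_neq0; rewrite !wtE; apply: eq_bigr => i _.
by rewrite mxE mulf_eq0 (negbTE a_neq0).
Qed.

Lemma wt_le_row_mx_comb m (a b : F) (u v : 'rV[F]_m) :
  a != b -> (wt v <= wt (row_mx (u + v) (a *: u + b *: v)))%N.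
Proof.
move=> neq_ab; rewrite wt_row_mx !wtE -big_split /=; apply: leq_sum => i _; rewrite !mxE.
have [-> // | vi_neq0] := eqVneq (v 0 i) 0.
have [uvi0 | //] := eqVneq (u 0 i + v 0 i) 0.
have -> : u 0 i = - v 0 i by apply/eqP; rewrite -addr_eq0 uvi0.
by rewrite mulrN addrC -mulrBl mulf_eq0 subr_eq0 eq_sym (negbTE neq_ab) (negbTE vi_neq0).
Qed.

Hypothesis conjD : forall x y : F, (x + y) ^+ r = x ^+ r + y ^+ r.

Lemma hdot_conj m (u v : 'rV[F]_m) :
  (0 < r)%N -> (forall x : F, (x ^+ r) ^+ r = x) -> hdot r u v = (hdot r v u) ^+ r.
Proof.
move=> r_gt0 conjK; rewrite /hdot.
rewrite (big_morph (fun x : F => x ^+ r) conjD (id1 := 0)) ?expr0n ?gtn_eqF //.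
by apply: eq_bigr => i _; rewrite exprMn conjK mulrC.
Qed.

Lemma hdot_row_mx_comb m (a b : F) (u v u' v' : 'rV[F]_m) :
  hdot r (row_mx (u + v) (a *: u + b *: v)) (row_mx (u' + v') (a *: u' + b *: v')) =
    hdot r u u' * (1 + a * a ^+ r) + hdot r v v' * (1 + b * b ^+ r)
  + hdot r u v' * (1 + a * b ^+ r) + hdot r v u' * (1 + b * a ^+ r).
Proof.
rewrite hdot_row_mx /hdot !mulr_suml -!big_split /=; apply: eq_bigr => i _.
by rewrite !mxE !conjD !exprMn; ring.
Qed.

End HermitianFormAndWeight.

Section MinimumDistance.

Variables (F : finFieldType) (m : nat).
Implicit Type C : {vspace 'rV[F]_m}.

Lemma min_dist_dim_gt0 C d : min_dist C d -> (0 < \dim C)%N.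
Proof.
case=> [[c cC /andP[c_neq0 _]] _]; rewrite lt0n dimv_eq0.
by apply: contraNneq c_neq0 => C0; rewrite -memv0 -C0.
Qed.

Lemma exists_min_dist C : (0 < \dim C)%N -> exists d, min_dist C d.
Proof.
rewrite lt0n dimv_eq0 -vpick0 => pick_neq0.
have nz_pick : (vpick C \in C) && (vpick C != 0) by rewrite memv_pick.
have [c /andP[cC c_neq0] c_min] :=
  @arg_minnP _ (vpick C) [pred c | (c \in C) && (c != 0)] (@wt F m) nz_pick.
exists (wt c); split; first by exists c; rewrite // c_neq0 /=.
by move=> c' c'C c'_neq0; apply: c_min; apply/andP.
Qed.

End MinimumDistance.

Section TwistedSum.

Variables (F : finFieldType) (m : nat).

Definition twist (a : F) : 'Hom('rV[F]_m, 'rV[F]_(m + m)) :=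
  linfun (mulmxr (row_mx 1%:M a%:M)).

Lemma twistE a u : twist a u = row_mx u (a *: u).
Proof. by rewrite lfunE /= mul_mx_row mulmx1 mul_mx_scalar. Qed.

Lemma lker_twist a : lker (twist a) = 0%VS.
Proof. by apply/eqP/lker0P => u u'; rewrite !twistE => /eq_row_mx[]. Qed.

Variables (a b : F) (C1 C2 : {vspace 'rV[F]_m}).

Definition twisted_sum := (twist a @: C1 + twist b @: C2)%VS.

Lemma twisted_sumP x :
  reflect (exists2 u, u \in C1 & exists2 v, v \in C2 &
             x = row_mx (u + v) (a *: u + b *: v))
          (x \in twisted_sum).
Proof.
apply: (iffP memv_addP) => [[_ /memv_imgP[u uC1 ->] [_ /memv_imgP[v vC2 ->] ->]] |].
  by exists u => //; exists v; rewrite // !twistE add_row_mx.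
case=> u uC1 [v vC2 ->]; exists (twist a u); first exact: memv_img.
by exists (twist b v); rewrite ?memv_img // !twistE add_row_mx.
Qed.

Lemma twisted_sum_herm_self_orth r :
  (0 < r)%N ->
  (forall x y : F, (x + y) ^+ r = x ^+ r + y ^+ r) ->
  (forall x : F, (x ^+ r) ^+ r = x) ->
  a ^+ r.+1 = -1 -> b ^+ r.+1 = -1 ->
  (forall v, v \in C1 -> v \in herm_dual r C2) ->
  herm_self_orth r twisted_sum.
Proof.
move=> r_gt0 conjD conjK norm_a norm_b C1_perp _ /twisted_sumP[u' u'C1 [v' v'C2 ->]].
apply/herm_dualP => _ /twisted_sumP[u uC1 [v vC2 ->]].
have /herm_dualP u_perp := C1_perp _ uC1.
have /herm_dualP u'_perp := C1_perp _ u'C1.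
have uv' : hdot r u v' = 0 by rewrite hdot_conj // u_perp // expr0n gtn_eqF.
rewrite hdot_row_mx_comb // -!exprS norm_a norm_b uv' (u'_perp v) //.
by rewrite addrN !mulr0 !mul0r !addr0.
Qed.

Hypothesis neq_ab : a != b.

Lemma dim_twisted_sum : \dim twisted_sum = (\dim C1 + \dim C2)%N.
Proof.
rewrite dimv_disjoint_sum ?limg_dim_eq ?lker_twist ?capv0 //.
apply/eqP; rewrite -subv0; apply/subvP => _ /memv_capP[/memv_imgP[u _ ->] /memv_imgP[v _]].
rewrite !twistE => /eq_row_mx[<- auv]; have : (a - b) *: u = 0 by rewrite scalerBl auv subrr.
by move/eqP; rewrite scaler_eq0 subr_eq0 (negbTE neq_ab) => /eqP->; rewrite scaler0 row_mx0 memv0.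
Qed.

Lemma twisted_sum_wt d1 d2 x :
  a != 0 -> min_dist C1 d1 -> min_dist C2 d2 ->
  x \in twisted_sum -> x != 0 -> (minn (2 * d1) d2 <= wt x)%N.
Proof.
move=> a_neq0 [_ d1_min] [_ d2_min] /twisted_sumP[u uC1 [v vC2 ->]] x_neq0.
have [v0 | v_neq0] := eqVneq v 0; last first.
  apply: leq_trans (geq_minr _ _) (leq_trans (d2_min v vC2 v_neq0) _).
  exact: wt_le_row_mx_comb.
move: x_neq0; rewrite v0 scaler0 !addr0 => x_neq0.
have u_neq0 : u != 0 by apply: contraNneq x_neq0 => ->; rewrite scaler0 row_mx0.
rewrite wt_row_mx wtZ // addnn -mul2n; apply: leq_trans (geq_minl _ _) _.
by rewrite leq_mul2l d1_min.
Qed.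

End TwistedSum.

Theorem corollary4p3 (r : nat) (F : finFieldType) (m k1 k2 d1 d2 : nat)
  (C1 C2 : {vspace 'rV[F]_m}) :
  prime_power r -> #|F| = (r ^ 2)%N ->
  code_params C1 k1 d1 -> code_params C2 k2 d2 ->
  (forall v, v \in C1 -> v \in herm_dual r C2) ->
  exists (C : {vspace 'rV[F]_(2 * m)}) (d : nat),
    code_params C (k1 + k2) d /\ (minn (2 * d1) d2 <= d)%N /\
    herm_self_orth r C.
Proof.
move=> r_pp cardF [dimC1 md1] [dimC2 md2] C1_perp.
have r_gt1 := prime_power_gt1 r_pp.
have conjD := exprD_prime_power r_pp cardF.
have [a [b [norm_a norm_b neq_ab]]] := exists_two_norm_neg1 r_gt1 cardF conjD.
have a_neq0 : a != 0.
  by apply: contra_eq_neq norm_a => ->; rewrite expr0n eq_sym oppr_eq0 oner_neq0.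
rewrite mul2n -addnn.
have dimC : \dim (twisted_sum a b C1 C2) = (k1 + k2)%N.
  by rewrite dim_twisted_sum // dimC1 dimC2.
have [d md] : exists d, min_dist (twisted_sum a b C1 C2) d.
  by apply: exists_min_dist; rewrite dimC -dimC1 ltn_addr // (min_dist_dim_gt0 md1).
exists (twisted_sum a b C1 C2), d; split; [by split | split].
  case: md => [[c cC /andP[c_neq0 /eqP <-]] _].
  exact: (twisted_sum_wt neq_ab a_neq0 md1 md2 cC c_neq0).
exact: (twisted_sum_herm_self_orth (ltnW r_gt1) conjD (conjK cardF) norm_a norm_b C1_perp).
Qed.
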